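(* (i) Every instance of the Balancing with Friendship game with $m$ machines is $\left(2-\frac1m,0\right)$-semi-smooth. Consequently its price of total anarchy is at most $2-\frac1m$. (ii) The bound is tight. For every $m\ge1$, take $n=m^2$ and let $G$ consist of $m$ vertex-disjoint cliques of size $m$. Let $\vec s$ be the state in which the $m$ members of each clique are placed on $m$ distinct machines, so that each machine receives exactly one member of each clique. Then $\vec s$ is a pure Nash equilibrium with $c(\vec s)=\left(2-\frac1m\right)c(\vec s^* )$.
   Context: An instance of the Balancing with Friendship (BwF) game consists of: - players $N=\{1,\dots,n\}$; - machines $M=\{1,\dots,m\}$; - a simple undirected graph $G=(N,E)$ (the friendship graph). A state is $\vec s\in M^n$. Let $X_k(\vec s)=\{i:s_i=k\}$ and $x_k(\vec s)=|X_k(\vec s)|$. The cost of player $i$ with $s_i=k$ is $x_k(\vec s)$ plus the number of neighbours of $i$ in $G$ not on machine $k$. The social cost is $c(\vec s)=\sum_ic_i(\vec s)$, and $\vec s^*$ minimizes $c$. A cost-minimization game is $(\lambda,\mu)$-semi-smooth if there exist probability distributions $\sigma_i$ over each player's strategies such that for every state $\vec s$, $$\sum_i\mathbf E_{s_i'\sim\sigma_i}[c_i(s_i',\vec s_{-i})]\le\lambda c(\vec s^* )+\mu c(\vec s).$$ A coarse correlated equilibrium (CCE) is a distribution $\sigma$ over states such that for every player $i$ and machine $s_i'$, $$\mathbf E_{\vec s\sim\sigma}[c_i(\vec s)]\le\mathbf E_{\vec s\sim\sigma}[c_i(s_i',\vec s_{-i})].$$ The price of total anarchy is $\sup_\sigma\mathbf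 E_{\vec s\sim\sigma}[c(\vec s)]/c(\vec s^* )$ over all CCE $\sigma$. *)

From HB Require Import structures.
From mathcomp Require Import all_boot all_order all_algebra.
Set Implicit Arguments. Unset Strict Implicit. Unset Printing Implicit Defensive.
Import Order.TTheory GRing.Theory Num.Theory.

(* Players 'I_n, machines 'I_m, friendship graph G : rel 'I_n
   (required symmetric and irreflexive where relevant). *)
Definition state (n m : nat) := {ffun 'I_n -> 'I_m}.

Definition load n m (s : state n m) (k : 'I_m) : nat := #|[set j | s j == k]|.

Definition cost n m (G : rel 'I_n) (s : state n m) (i : 'I_n) : nat :=
  load s (s i) + #|[set j | G i j & s j != s i]|.

Definition social_cost n m (G : rel 'I_n) (s : state n m) : nat :=
  \sum_(i < n) cost G s i.

Definition deviate n m (s : state n m) (i : 'I_n) (k : 'I_m) : state n m :=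
  [ffun j => if j == i then k else s j].

Definition is_opt n m (G : rel 'I_n) (sopt : state n m) : Prop :=
  forall s : state n m, (social_cost G sopt <= social_cost G s)%N.

Local Open Scope ring_scope.

Definition semi_smooth n m (G : rel 'I_n) (sopt : state n m) (lam mu : rat) : Prop :=
  exists sigma : 'I_n -> 'I_m -> rat,
    (forall i k, 0 <= sigma i k) /\ (forall i, \sum_(k < m) sigma i k = 1) /\
    forall s : state n m,
      \sum_(i < n) \sum_(k < m) sigma i k * (cost G (deviate s i k) i)%:R
        <= lam * (social_cost G sopt)%:R + mu * (social_cost G s)%:R.

Definition state_distr n m (sigma : state n m -> rat) : Prop :=
  (forall s, 0 <= sigma s) /\ \sum_(s : state n m) sigma s = 1.

Definition is_CCE n m (G : rel 'I_n) (sigma : state n m -> rat) : Prop :=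
  state_distr sigma /\
  forall (i : 'I_n) (k : 'I_m),
    \sum_(s : state n m) sigma s * (cost G s i)%:R
      <= \sum_(s : state n m) sigma s * (cost G (deviate s i k) i)%:R.

Definition PoTA_le n m (G : rel 'I_n) (sopt : state n m) (lam : rat) : Prop :=
  forall sigma : state n m -> rat, is_CCE G sigma ->
    \sum_(s : state n m) sigma s * (social_cost G s)%:R
      <= lam * (social_cost G sopt)%:R.

Definition pure_NE n m (G : rel 'I_n) (s : state n m) : Prop :=
  forall (i : 'I_n) (k : 'I_m), (cost G s i <= cost G (deviate s i k) i)%N.

Local Close Scope ring_scope.

(* m vertex-disjoint cliques of size m on players 'I_(m*m):
   player p belongs to clique p %/ m. *)
Definition cliques (m : nat) : rel 'I_(m * m) :=
  fun p q => (p != q) && (p %/ m == q %/ m).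

(* each clique's members are on distinct machines (hence, there being m
   members and m machines, each machine gets exactly one member per clique) *)
Definition clique_spread (m : nat) (s : state (m * m) m) : Prop :=
  forall p q : 'I_(m * m), p %/ m = q %/ m -> s p = s q -> p = q.

Arguments cliques : clear implicits.

From HB Require Import structures.
From mathcomp Require Import all_boot all_order all_algebra.
From mathcomp Require Import zify ring lra.
Import Order.TTheory GRing.Theory Num.Theory.
Set Implicit Arguments. Unset Strict Implicit.

(* (i) Let every player deviate to a machine chosen uniformly at random.  With
   d_i the degree of i, the deviation costs of player i sum to
   m + n + d_i (m - 1) - 1 whatever the other players do
   ([sum_deviation_costs]).  Every state s' satisfies the two lower bounds
   n + sum_i d_i <= c(s') and n^2 <= m c(s') (the latter by Cauchy-Schwarz on
   the machine loads), and these give the (2 - 1/m, 0)-semi-smoothness bound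
   against any state, in particular against the optimum
   ([uniform_deviation_bound]).  The generic smoothness argument
   ([semi_smooth_PoTA]) turns (lam, mu)-semi-smoothness into a bound
   lam / (1 - mu) on the price of total anarchy.

   (ii) With m cliques of size m on m machines, a state spreading each clique
   over all machines puts m players on each machine; every player pays
   m + (m - 1), and any deviation costs at least as much, so it is a Nash
   equilibrium.  Placing each clique on its own machine costs m per player,
   which meets the lower bound n^2 / m = m^3, so the optimum is m^3 and the
   ratio is (2m - 1) / m = 2 - 1/m. *)

Lemma card_set_sum (T : finType) (P : pred T) :
  #|[set x | P x]| = (\sum_x (P x : nat))%N.
Proof.
rewrite -sum1_card big_mkcond /=; apply: eq_bigr => x _.
by rewrite inE; case: (P x).
Qed.

Lemma sum_indicator_eq (T : finType) (a : T) : (\sum_x ((x == a) : nat) = 1)%N.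
Proof. by rewrite (bigD1 a) //= eqxx big1 // => x /negPf ->. Qed.

Lemma sum_fiber_cards (T : finType) m (f : T -> 'I_m) :
  (\sum_k #|[set x | f x == k]| = #|T|)%N.
Proof.
under eq_bigr do rewrite card_set_sum.
rewrite exchange_big /= -sum1_card; apply: eq_bigr => x _.
by rewrite -(sum_indicator_eq (f x)); apply: eq_bigr => k _; rewrite eq_sym.
Qed.

Lemma full_fibers (T : finType) m (f g : T -> 'I_m) : #|T| = (m * m)%N ->
  (forall x y, f x = f y -> g x = g y -> x = y) ->
  forall k, #|[set x | f x == k]| = m.
Proof.
move=> cardT fg_inj.
have fiber_le k : (#|[set x | f x == k]| <= m)%N.
  rewrite -(card_in_imset (f := g)); last first.
    by move=> x y; rewrite !inE => /eqP fx /eqP fy; apply: fg_inj; rewrite fx fy.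
  by rewrite -[X in (_ <= X)%N](card_ord m) max_card.
have deficit0 : (\sum_k (m - #|[set x | f x == k]|) = 0)%N.
  have : (\sum_k (#|[set x | f x == k]| + (m - #|[set x | f x == k]|)) = m * m)%N.
    by under eq_bigr do rewrite subnKC ?fiber_le //; rewrite sum_nat_const card_ord.
  rewrite big_split /= sum_fiber_cards cardT; lia.
move/eqP: deficit0; rewrite sum_nat_eq0 => /forallP deficit k.
by have := deficit k; have := fiber_le k; rewrite /= subn_eq0; lia.
Qed.

Section CauchySchwarz.
Local Open Scope ring_scope.

(* Cauchy-Schwarz for m natural numbers: (sum x)^2 <= m * sum x^2, from
   0 <= sum_{k,l} (x_k - x_l)^2 = 2 (m sum x^2 - (sum x)^2). *)
Lemma sum_sq_le (m : nat) (x : 'I_m -> nat) :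
  ((\sum_k x k) ^ 2 <= m * \sum_k (x k) ^ 2)%N.
Proof.
rewrite -(ler_nat rat) natrX natrM !natr_sum.
under [X in _ <= _ * X]eq_bigr do rewrite natrX.
set y := fun k => (x k)%:R : rat.
set Q := \sum_k y k ^+ 2; set S := \sum_k y k.
have row_sum k : \sum_l (y k - y l) ^+ 2 = m%:R * y k ^+ 2 - y k * S *+ 2 + Q.
  under eq_bigr do rewrite sqrrB.
  rewrite big_split /= sumrB sumr_const card_ord sumrMnl -mulr_sumr -mulr_natl.
  by rewrite /S /Q; ring.
have square_sum : \sum_k \sum_l (y k - y l) ^+ 2 = (m%:R * Q - S ^+ 2) *+ 2.
  under eq_bigr do rewrite row_sum.
  rewrite big_split /= sumrB sumr_const card_ord sumrMnl -mulr_sumr -mulr_suml.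
  by rewrite -mulr_natl -/Q -/S; clearbody Q S; ring.
have : 0 <= \sum_k \sum_l (y k - y l) ^+ 2 :> rat.
  by apply: sumr_ge0 => k _; apply: sumr_ge0 => l _; exact: sqr_ge0.
by rewrite square_sum pmulrn_lge0 // subr_ge0.
Qed.

End CauchySchwarz.

Definition degree n (G : rel 'I_n) (i : 'I_n) : nat := #|[set j | G i j]|.

Lemma cost_as_sum n m (G : rel 'I_n) (s : state n m) i :
  cost G s i = (\sum_j ((s j == s i) + (G i j && (s j != s i))))%N.
Proof. by rewrite /cost /load !card_set_sum big_split. Qed.

(* Player i deviating to k meets one copy of itself plus everyone on k. *)
Lemma deviation_cost_as_sum n m (G : rel 'I_n) (s : state n m) i k :
  irreflexive G -> cost G (deviate s i k) i =
  (\sum_j ((if j == i then 1 else (s j == k : nat)) + (G i j && (s j != k))))%N.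
Proof.
move=> irrG; rewrite cost_as_sum; apply: eq_bigr => j _.
rewrite /deviate !ffunE eqxx.
by case: (eqVneq j i) => [->|//]; rewrite irrG eqxx.
Qed.

(* Summed over all targets k, each other player is met once and each friend
   is missed on m - 1 machines, independently of the state. *)
Lemma sum_deviation_costs n m (G : rel 'I_n) (s : state n m) i :
  (0 < m)%N -> irreflexive G ->
  (\sum_k cost G (deviate s i k) i + 1 = m + n + degree G i * (m - 1))%N.
Proof.
move=> m_gt0 irrG; under eq_bigr do rewrite deviation_cost_as_sum //.
rewrite exchange_big /=; under eq_bigr do rewrite big_split /=.
rewrite big_split /= addnAC.
have meet : (\sum_j \sum_k (if j == i then 1 else (s j == k : nat)) + 1 = m + n)%N.
  rewrite (bigD1 i) //= eqxx sum_nat_const card_ord muln1.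
  rewrite (eq_bigr (fun _ => 1%N)); last first.
    move=> j /negPf ->; rewrite -(sum_indicator_eq (s j)).
    by apply: eq_bigr => k _; rewrite eq_sym.
  rewrite sum1_card cardC1 card_ord; have := ltn_ord i; lia.
have miss : (\sum_j \sum_k (G i j && (s j != k) : nat) = degree G i * (m - 1))%N.
  rewrite /degree card_set_sum big_distrl /=; apply: eq_bigr => j _.
  case: (G i j) => /=; last by rewrite big1.
  have split_m : (\sum_k ((s j != k : nat) + (k == s j : nat)) = m)%N.
    rewrite (eq_bigr (fun=> 1%N)); first by rewrite sum_nat_const card_ord muln1.
    by move=> k _; rewrite eq_sym; case: (k == s j).
  by move: split_m; rewrite big_split /= sum_indicator_eq; lia.
by rewrite meet miss.
Qed.

(* A player pays at least 1 for its own machine and 1 per friend. *)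
Lemma cost_ge_degree n m (G : rel 'I_n) (s : state n m) i : irreflexive G ->
  (1 + degree G i <= cost G s i)%N.
Proof.
move=> irrG; rewrite cost_as_sum /degree card_set_sum -(sum_indicator_eq i).
rewrite -big_split /=; apply: leq_sum => j _.
case: (eqVneq j i) => [->|_]; first by rewrite irrG eqxx.
by case: (G i j); case: (s j == s i).
Qed.

Lemma social_cost_ge_degrees n m (G : rel 'I_n) (s : state n m) : irreflexive G ->
  (n + \sum_i degree G i <= social_cost G s)%N.
Proof.
move=> irrG; rewrite -{1}(card_ord n) -sum1_card -big_split /=.
by apply: leq_sum => i _; apply: cost_ge_degree.
Qed.

Lemma sum_loads n m (s : state n m) : (\sum_k load s k = n)%N.
Proof. by rewrite /load sum_fiber_cards card_ord. Qed.

(* The players of machine k each pay its load, giving load^2 in total. *)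
Lemma sum_player_loads n m (s : state n m) :
  (\sum_i load s (s i) = \sum_k load s k ^ 2)%N.
Proof.
rewrite (partition_big s predT) //=; apply: eq_bigr => k _.
rewrite (eq_bigr (fun _ => load s k)); last by move=> i /eqP ->.
rewrite sum_nat_const -mulnn; congr (_ * _)%N.
by apply: eq_card => j; rewrite !inE.
Qed.

Lemma social_cost_ge_sq n m (G : rel 'I_n) (s : state n m) :
  (n ^ 2 <= m * social_cost G s)%N.
Proof.
apply: (@leq_trans (m * \sum_i load s (s i))).
  by rewrite sum_player_loads -{1}(sum_loads s); exact: sum_sq_le.
by rewrite leq_mul2l; apply/orP; right; apply: leq_sum => i _; exact: leq_addr.
Qed.

Local Open Scope ring_scope.

(* The arithmetic core of the smoothness bound: with N = n, D = sum of degrees,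
   C = c(s') and M = m, the average deviation cost is at most (2 - 1/M) C. *)
Lemma smoothness_arith (N D C M : rat) : 1 <= M -> 0 <= N -> 0 <= D ->
  N + D <= C -> N ^+ 2 <= M * C ->
  1 / M * (N * (M + N) + D * (M - 1) - N) <= (2 - 1 / M) * C.
Proof.
move=> M_ge1 N_ge0 D_ge0 ND_le sq_le.
have M_gt0 : 0 < M by apply: lt_le_trans M_ge1.
have M_neq0 : M != 0 by rewrite gt_eqF.
have rhs : (2 - M^-1) * C * M = 2 * M * C - C by field.
rewrite !div1r mulrC ler_pdivrMr // rhs.
have : (N + D) * (M - 1) <= C * (M - 1) by rewrite ler_wpM2r // subr_ge0.
nra.
Qed.

Lemma uniform_deviation_bound n m (G : rel 'I_n) (s s' : state n m) :
  (0 < m)%N -> irreflexive G ->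
  \sum_(i < n) \sum_(k < m) 1 / m%:R * (cost G (deviate s i k) i)%:R
     <= (2 - 1 / m%:R) * (social_cost G s')%:R :> rat.
Proof.
move=> m_gt0 irrG.
have deviations i : (\sum_k cost G (deviate s i k) i)%:R =
    m%:R + n%:R + (degree G i)%:R * (m%:R - 1) - 1 :> rat.
  have /(congr1 (fun x => x%:R : rat)) := sum_deviation_costs s i m_gt0 irrG.
  by rewrite /= !natrD natrM natrB // => <-; rewrite addrK.
have total : \sum_i (m%:R + n%:R + (degree G i)%:R * (m%:R - 1) - 1) =
    n%:R * (m%:R + n%:R) + (\sum_i degree G i)%:R * (m%:R - 1) - n%:R :> rat.
  rewrite sumrB big_split /= !sumr_const card_ord natr_sum -mulr_suml.
  by rewrite -mulr_natl mulr1 mulr_natl.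
under eq_bigr do rewrite -mulr_sumr -natr_sum deviations.
rewrite -big_distrr /= total; apply: smoothness_arith; rewrite ?ler0n ?ler1n //.
- by rewrite -natrD ler_nat social_cost_ge_degrees.
- by rewrite -natrX -natrM ler_nat social_cost_ge_sq.
Qed.

Lemma uniform_semi_smooth n m (G : rel 'I_n) (sopt : state n m) :
  (0 < m)%N -> irreflexive G -> semi_smooth G sopt (2 - 1 / m%:R) 0.
Proof.
move=> m_gt0 irrG; have m_neq0 : m%:R != 0 :> rat by rewrite pnatr_eq0 -lt0n.
exists (fun _ _ => 1 / m%:R); split; first by move=> *; rewrite divr_ge0.
split; first by move=> i; rewrite sumr_const card_ord -mulr_natl; field.
by move=> s; rewrite mul0r addr0; exact: uniform_deviation_bound.
Qed.

(* The smoothness framework: averaging the CCE inequalities against the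
   smoothness distributions gives E[c] <= lam c(sopt) + mu E[c]. *)
Lemma CCE_cost_le n m (G : rel 'I_n) (sopt : state n m) (lam mu : rat)
    (sigma : state n m -> rat) :
  is_CCE G sigma -> semi_smooth G sopt lam mu ->
  \sum_s sigma s * (social_cost G s)%:R <=
    lam * (social_cost G sopt)%:R + mu * \sum_s sigma s * (social_cost G s)%:R.
Proof.
move=> [[sigma_ge0 sigma_sum1] no_regret] [tau [tau_ge0 [tau_sum1 smooth]]].
pose expected i (dev : state n m -> state n m) :=
  \sum_s sigma s * (cost G (dev s) i)%:R.
have player_bound i :
    expected i id <= \sum_k tau i k * expected i (fun s => deviate s i k).
  rewrite -[expected i id]mul1r -(tau_sum1 i) mulr_suml.
  by apply: ler_sum => k _; apply: ler_wpM2l => //; exact: no_regret.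
have by_players : \sum_s sigma s * (social_cost G s)%:R = \sum_i expected i id.
  rewrite exchange_big /=; apply: eq_bigr => s _.
  by rewrite /social_cost natr_sum mulr_sumr.
have by_states : \sum_i \sum_k tau i k * expected i (fun s => deviate s i k) =
    \sum_s sigma s * \sum_i \sum_k tau i k * (cost G (deviate s i k) i)%:R.
  symmetry; under eq_bigr do rewrite mulr_sumr.
  rewrite exchange_big /=; apply: eq_bigr => i _.
  under eq_bigr do rewrite mulr_sumr.
  rewrite exchange_big /=; apply: eq_bigr => k _.
  rewrite /expected mulr_sumr; apply: eq_bigr => s _; ring.
rewrite by_players; apply: (le_trans (ler_sum _ (fun i _ => player_bound i))).
rewrite by_states -by_players.
apply: (@le_trans _ _ (\sum_s sigma s *
    (lam * (social_cost G sopt)%:R + mu * (social_cost G s)%:R))).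
  by apply: ler_sum => s _; apply: ler_wpM2l.
under eq_bigr do rewrite mulrDr.
rewrite big_split /= -mulr_suml sigma_sum1 mul1r mulr_sumr lerD2l.
by apply: ler_sum => s _; rewrite mulrCA.
Qed.

Lemma semi_smooth_PoTA n m (G : rel 'I_n) (sopt : state n m) (lam mu : rat) :
  mu < 1 -> semi_smooth G sopt lam mu -> PoTA_le G sopt (lam / (1 - mu)).
Proof.
move=> mu_lt1 smooth sigma cce.
have := CCE_cost_le cce smooth.
rewrite mulrAC ler_pdivlMr ?subr_gt0 //; nra.
Qed.

Local Close Scope ring_scope.

Section CliqueInstance.
Variable m' : nat.
Local Notation m := m'.+1.
Local Notation G := (cliques m).

Definition clique_of (p : 'I_(m * m)) : 'I_m := inord (p %/ m).
Definition rank_in_clique (p : 'I_(m * m)) : 'I_m := inord (p %% m).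

Lemma clique_ofE p : val (clique_of p) = p %/ m.
Proof. by rewrite /clique_of /= inordK // ltn_divLR // ltn_ord. Qed.

Lemma rank_in_cliqueE p : val (rank_in_clique p) = p %% m.
Proof. by rewrite /rank_in_clique /= inordK // ltn_mod. Qed.

Lemma eq_clique_of p q : (clique_of p == clique_of q) = (p %/ m == q %/ m).
Proof. by rewrite -val_eqE /= !clique_ofE. Qed.

Lemma clique_size c : #|[set p | clique_of p == c]| = m.
Proof.
apply: (full_fibers (g := rank_in_clique)); first by rewrite card_ord.
move=> p q /eqP; rewrite eq_clique_of => /eqP eq_div.
move/(congr1 val); rewrite !rank_in_cliqueE => eq_mod.
by apply: val_inj; rewrite /= (divn_eq p m) (divn_eq q m) eq_div eq_mod.
Qed.

Lemma irreflexive_cliques : irreflexive G.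
Proof. by move=> i; rewrite /cliques eqxx. Qed.

Lemma degree_cliques i : degree G i = m'.
Proof.
have := clique_size (clique_of i); rewrite (cardsD1 i) inE eqxx add1n => -[others].
rewrite -[RHS]others; apply: eq_card => j.
by rewrite !inE eq_clique_of /cliques eq_sym [i %/ m == _]eq_sym.
Qed.

Section Spread.
Variable s : state (m * m) m.
Hypothesis spread : clique_spread s.

Lemma load_spread k : load s k = m.
Proof.
apply: (full_fibers (g := clique_of)); first by rewrite card_ord.
by move=> p q eq_s /eqP; rewrite eq_clique_of => /eqP; move/spread; apply.
Qed.

(* No friend shares a machine, so every friend is paid for. *)
Lemma cost_spread i : cost G s i = m + m'.
Proof.
rewrite /cost load_spread; congr (_ + _).
transitivity (degree G i); last exact: degree_cliques.
apply: eq_card => j; rewrite !inE andb_idr // /cliques => /andP [neq_ij /eqP same].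
by apply: contraNneq neq_ij => /(spread (esym same)) ->.
Qed.

Lemma friends_on_machine_le1 i k : #|[set j | G i j && (s j == k)]| <= 1.
Proof.
apply/card_le1_eqP => p q; rewrite !inE.
move=> /andP [/andP [_ /eqP ip] /eqP sp] /andP [/andP [_ /eqP iq] /eqP sq].
by apply: spread; rewrite -?ip -?iq // sp sq.
Qed.

(* Moving to k joins its m players and still misses all but at most one
   friend: at least (m + 1) + (m' - 1) = m + m'. *)
Lemma pure_NE_spread : pure_NE G s.
Proof.
move=> i k; rewrite cost_spread.
have [->|k_neq] := eqVneq k (s i).
  suff -> : deviate s i (s i) = s by rewrite cost_spread.
  by apply/ffunP => j; rewrite ffunE; case: eqP => // ->.
rewrite deviation_cost_as_sum ?big_split /=; last exact: irreflexive_cliques.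
have join : \sum_j (if j == i then 1 else (s j == k : nat)) = 1 + m.
  rewrite -[X in _ = 1 + X](load_spread k) /load card_set_sum.
  rewrite -[in RHS](sum_indicator_eq i) -big_split /=.
  apply: eq_bigr => j _; case: (eqVneq j i) => [->|//].
  by rewrite eq_sym (negPf k_neq).
have miss : m' <= \sum_j (G i j && (s j != k) : nat) + 1.
  rewrite -[X in X <= _](degree_cliques i) /degree card_set_sum.
  apply: (leq_trans _ (leq_add (leqnn _) (friends_on_machine_le1 i k))).
  rewrite card_set_sum -big_split /=; apply: leq_sum => j _.
  by case: (G i j); case: (s j == k).
by rewrite join [1 + m]addnC -addnA leq_add2l addnC.
Qed.

Lemma social_cost_spread : social_cost G s = m * m * (m + m').
Proof.
rewrite /social_cost (eq_bigr (fun _ => m + m')) => [|i _]; last exact: cost_spread.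
by rewrite sum_nat_const card_ord.
Qed.

End Spread.

Definition clique_state : state (m * m) m := [ffun p => clique_of p].

Lemma cost_clique_state i : cost G clique_state i = m.
Proof.
rewrite /cost /load ffunE.
rewrite (eq_card (B := [set p | clique_of p == clique_of i])) => [|j]; last first.
  by rewrite !inE ffunE.
rewrite clique_size; apply/eqP; rewrite -[X in _ == X]addn0 eqn_add2l cards_eq0.
apply/eqP/setP => j; rewrite !inE !ffunE /cliques eq_clique_of [j %/ m == _]eq_sym.
by case: (i %/ m == j %/ m); rewrite ?andbF.
Qed.

Lemma social_cost_clique_state : social_cost G clique_state = m * m * m.
Proof.
rewrite /social_cost (eq_bigr (fun _ => m)) => [|i _]; last exact: cost_clique_state.
by rewrite sum_nat_const card_ord.
Qed.

(* The optimum meets the lower bound n^2 / m = m^3. *)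
Lemma optimum_cliques (sopt : state (m * m) m) :
  is_opt G sopt -> social_cost G sopt = m * m * m.
Proof.
move=> opt; apply/eqP; rewrite eqn_leq; apply/andP; split.
  by rewrite -social_cost_clique_state opt.
rewrite -(leq_pmul2l (ltn0Sn m')); apply: leq_trans (social_cost_ge_sq G sopt).
by apply: eq_leq; rewrite expnS expn1 !mulnA.
Qed.

End CliqueInstance.

Local Open Scope ring_scope.

Theorem theorem10 :
  (forall (n m : nat) (G : rel 'I_n), (0 < m)%N -> symmetric G -> irreflexive G ->
     forall sopt : state n m, is_opt G sopt ->
       semi_smooth G sopt (2 - 1 / m%:R) 0 /\ PoTA_le G sopt (2 - 1 / m%:R))
  /\
  (forall m : nat, (0 < m)%N ->
     forall s : state (m * m)%N m, clique_spread s ->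
       pure_NE (cliques m) s /\
       forall sopt : state (m * m)%N m, is_opt (cliques m) sopt ->
         ((social_cost (cliques m) s)%:R : rat)
           = (2 - 1 / m%:R) * (social_cost (cliques m) sopt)%:R).
Proof.
split.
  move=> n m G m_gt0 _ irrG sopt _.
  have smooth := uniform_semi_smooth sopt m_gt0 irrG; split => //.
  by rewrite -[X in PoTA_le _ _ X]divr1 -[1 in X in _ / X]subr0;
     apply: semi_smooth_PoTA.
case=> [//|m'] _ s spread; split; first exact: pure_NE_spread.
move=> sopt opt; rewrite social_cost_spread // optimum_cliques //.
rewrite -addn1 !natrM !natrD.
have m_neq0 : m'%:R + 1 != 0 :> rat by rewrite -[1]/(1%:R) -natrD pnatr_eq0 addn1.
by field.
Qed.
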